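(* For all real $0\le a\le b\le 1$ and all $\epsilon\in(0,\tfrac12)$, $$\frac{(\sqrt b+\sqrt a)^{2(1+\epsilon)}+(\sqrt b-\sqrt a)^{2(1+\epsilon)}}{2}-a^{1+\epsilon}-b^{1+\epsilon}\le (3\epsilon+2\epsilon^2)a+(b^\epsilon-a^\epsilon)a.$$ *)

From Stdlib Require Import Reals.
Open Scope R_scope.

(* Real power x^y for x >= 0 and y > 0, with the convention 0^y = 0.
   (Stdlib's Rpower x y = exp (y * ln x) gives 1 at x = 0, so we patch 0.) *)
Definition rpow (x y : R) : R :=
  if Req_EM_T x 0 then 0 else Rpower x y.

(* With x = sqrt a, y = sqrt b and q = 2(1+eps) in (2,3), the left-hand side is
   ((y+x)^q + (y-x)^q)/2 - x^q - y^q.  Two mean-value steps starting from the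
   concavity of t |-> t^(q-2) give the second-order estimate
   (y+x)^q + (y-x)^q <= 2 y^q + q(q-1) x^2 y^(q-2),
   which bounds the left-hand side by (1 + 3 eps + 2 eps^2) a b^eps - a^(1+eps).
   The claim follows because b^eps <= 1. *)

From Stdlib Require Import Reals Lra.
From Coquelicot Require Import Coquelicot.
Open Scope R_scope.

(* |s|^p, equal to 0 at s = 0; being defined on all of R it can be
   differentiated by auto_derive and composed freely. *)
Definition abspow (p s : R) : R := Rabs s * exp ((p - 1) * ln (Rabs s)).

Lemma exp_le_exp x y : x <= y -> exp x <= exp y.
Proof. intros [Hlt | ->]; [left; apply exp_increasing | right]; auto. Qed.

Lemma abspow_exp p s : 0 < s -> abspow p s = exp (p * ln s).
Proof.
  intros Hs. unfold abspow. rewrite Rabs_pos_eq by lra.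
  rewrite <- (exp_ln s) at 1 by lra. rewrite <- exp_plus. f_equal. ring.
Qed.

Lemma abspow0 p : abspow p 0 = 0.
Proof. unfold abspow. rewrite Rabs_R0. ring. Qed.

Lemma abspow_ge0 p s : 0 <= abspow p s.
Proof. unfold abspow. apply Rmult_le_pos; [apply Rabs_pos | left; apply exp_pos]. Qed.

Lemma abspow_1_plus p s : 0 < s -> abspow (1 + p) s = s * abspow p s.
Proof.
  intros Hs. rewrite !abspow_exp by lra.
  rewrite <- (exp_ln s) at 2 by lra. rewrite <- exp_plus. f_equal. ring.
Qed.

Lemma abspow_le_abs p s : 1 <= p -> Rabs s <= 1 -> abspow p s <= Rabs s.
Proof.
  intros Hp Hs. destruct (Req_dec s 0) as [-> | Hs0].
  { rewrite abspow0, Rabs_R0. lra. }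
  assert (Hpos : 0 < Rabs s) by (apply Rabs_pos_lt; exact Hs0).
  assert (Hln : ln (Rabs s) <= 0) by (rewrite <- ln_1; apply ln_le; lra).
  assert (Hexp : exp ((p - 1) * ln (Rabs s)) <= exp 0) by (apply exp_le_exp; nra).
  rewrite exp_0 in Hexp.
  unfold abspow. nra.
Qed.

Lemma is_derive_abspow p s : 0 < s -> is_derive (abspow p) s (p * abspow (p - 1) s).
Proof.
  intros Hs. unfold abspow. auto_derive.
  - rewrite Rabs_pos_eq by lra. repeat split; lra.
  - rewrite Rabs_pos_eq by lra. rewrite sign_eq_1 by lra.
    assert (E : exp ((p - 1) * ln s) = s * exp ((p - 1 - 1) * ln s)).
    { rewrite <- (exp_ln s) at 2 by lra. rewrite <- exp_plus. f_equal; ring. }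
    rewrite E. field. lra.
Qed.

Lemma continuity_pt_abspow p s : 1 < p -> continuity_pt (abspow p) s.
Proof.
  intros Hp. destruct (Req_dec s 0) as [-> | Hs].
  - intros e He. exists (Rmin 1 e). split; [apply Rmin_pos; lra |].
    intros x [_ Hx]. unfold dist in *; simpl in *; unfold R_dist in *.
    rewrite abspow0, Rminus_0_r in *. rewrite Rabs_pos_eq by apply abspow_ge0.
    assert (Hx1 : Rabs x <= 1) by (left; eapply Rlt_le_trans; [exact Hx | apply Rmin_l]).
    assert (Hxe : Rabs x < e) by (eapply Rlt_le_trans; [exact Hx | apply Rmin_r]).
    pose proof (abspow_le_abs p x ltac:(lra) Hx1). lra.
  - apply continuity_pt_filterlim.
    apply (ex_derive_continuous (K := R_AbsRing) (V := R_NormedModule)).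
    unfold abspow. auto_derive. repeat split; auto. apply Rabs_pos_lt; auto.
Qed.

Lemma continuity_pt_abspow_comp p (g : R -> R) c :
  1 < p -> continuity_pt g c -> continuity_pt (fun t => abspow p (g t)) c.
Proof.
  intros Hp Hg. apply (continuity_pt_comp g (abspow p)); [exact Hg | apply continuity_pt_abspow, Hp].
Qed.

Ltac continuity_pt_solve :=
  repeat first
    [ apply continuity_pt_abspow_comp; [lra |] | apply continuity_pt_minus
    | apply continuity_pt_plus | apply continuity_pt_mult | apply continuity_pt_id
    | apply continuity_pt_const; intros ? ?; reflexivity ].

Lemma le_of_derive_ge0 (f df : R -> R) a b : a <= b ->
  (forall c, a < c < b -> is_derive f c (df c)) ->
  (forall c, a <= c <= b -> continuity_pt f c) ->
  (forall c, a <= c <= b -> 0 <= df c) -> f a <= f b.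
Proof.
  intros [Hab | <-] Hd Hc Hdf; [| lra].
  destruct (MVT_gen f a b df) as [c [Hcab Hmvt]];
    rewrite ?Rmin_left, ?Rmax_right in * by lra; auto.
  pose proof (Hdf c Hcab). nra.
Qed.

(* Weighted AM-GM: r ln(u/A) + (1-r) ln(y/A) <= 0 with A = r u + (1-r) y. *)
Lemma abspow_le_tangent r y u : 0 <= r <= 1 -> 0 < y -> 0 <= u ->
  abspow r u <= (r * u + (1 - r) * y) * exp ((r - 1) * ln y).
Proof.
  intros Hr Hy [Hu | <-].
  - set (A := r * u + (1 - r) * y).
    assert (HA : 0 < A) by (unfold A; destruct (Rle_dec u y); nra).
    assert (ln_le_sub1 : forall z, 0 < z -> ln z <= z - 1).
    { intros z Hz. pose proof (exp_ineq1_le (ln z)) as H. rewrite exp_ln in H; lra. }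
    pose proof (ln_le_sub1 (u / A) ltac:(apply Rdiv_lt_0_compat; lra)) as Lu.
    pose proof (ln_le_sub1 (y / A) ltac:(apply Rdiv_lt_0_compat; lra)) as Ly.
    rewrite ln_div in Lu, Ly by lra.
    assert (E : r * (u / A - 1) + (1 - r) * (y / A - 1) = 0)
      by (field_simplify_eq; [unfold A; ring | lra]).
    rewrite abspow_exp by lra. rewrite <- (exp_ln A) at 1 by lra. rewrite <- exp_plus.
    apply exp_le_exp. nra.
  - rewrite abspow0. apply Rmult_le_pos; [nra | left; apply exp_pos].
Qed.

Lemma abspow_midpoint_concave r y x : 0 <= r <= 1 -> 0 < y -> 0 <= x <= y ->
  abspow r (y + x) + abspow r (y - x) <= 2 * abspow r y.
Proof.
  intros Hr Hy Hx.
  pose proof (abspow_le_tangent r y (y + x) Hr Hy ltac:(lra)).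
  pose proof (abspow_le_tangent r y (y - x) Hr Hy ltac:(lra)).
  assert (Ey : abspow r y = y * exp ((r - 1) * ln y)).
  { rewrite abspow_exp by lra. rewrite <- (exp_ln y) at 2 by lra.
    rewrite <- exp_plus. f_equal; ring. }
  rewrite Ey. nra.
Qed.

Lemma abspow_sub_le m y x : 1 < m <= 2 -> 0 < y -> 0 <= x <= y ->
  abspow m (y + x) - abspow m (y - x) <= 2 * m * x * abspow (m - 1) y.
Proof.
  intros Hm Hy Hx.
  set (K := abspow (m - 1) y).
  pose proof (le_of_derive_ge0
    (fun c => 2 * m * K * c - abspow m (y + c) + abspow m (y - c))
    (fun c => 2 * m * K - m * abspow (m - 1) (y + c) - m * abspow (m - 1) (y - c))
    0 x ltac:(lra)) as Hmono.
  cbv beta in Hmono. rewrite Rplus_0_r, Rminus_0_r in Hmono.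
  enough (2 * m * K * 0 - abspow m y + abspow m y <=
          2 * m * K * x - abspow m (y + x) + abspow m (y - x)) by lra.
  apply Hmono.
  - intros c Hc. auto_derive; change (fun s => abspow m s) with (abspow m);
      replace (y + - c) with (y - c) by ring.
    + split; [exists (m * abspow (m - 1) (y + c)); apply is_derive_abspow; lra |].
      split; [exists (m * abspow (m - 1) (y - c)); apply is_derive_abspow; lra | easy].
    + rewrite (is_derive_unique _ _ _ (is_derive_abspow m (y + c) ltac:(lra))).
      rewrite (is_derive_unique _ _ _ (is_derive_abspow m (y - c) ltac:(lra))).
      ring.
  - intros c Hc. continuity_pt_solve.
  - intros c Hc. pose proof (abspow_midpoint_concave (m - 1) y c ltac:(lra) Hy ltac:(lra)).
    unfold K. nra.
Qed.

Lemma abspow_add_sub_le q y x : 2 < q <= 3 -> 0 <= x <= y ->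
  abspow q (y + x) + abspow q (y - x) <= 2 * abspow q y + q * (q - 1) * x ^ 2 * abspow (q - 2) y.
Proof.
  intros Hq Hx. destruct (Req_dec y 0) as [-> | Hy0].
  { replace x with 0 by lra. rewrite Rplus_0_r, Rminus_0_r, !abspow0. lra. }
  assert (Hy : 0 < y) by lra.
  set (K := abspow (q - 2) y).
  pose proof (le_of_derive_ge0
    (fun c => q * (q - 1) * K * c ^ 2 - abspow q (y + c) - abspow q (y - c))
    (fun c => 2 * q * (q - 1) * K * c - q * abspow (q - 1) (y + c) + q * abspow (q - 1) (y - c))
    0 x ltac:(lra)) as Hmono.
  cbv beta in Hmono. rewrite Rplus_0_r, Rminus_0_r in Hmono.
  enough (q * (q - 1) * K * 0 ^ 2 - abspow q y - abspow q y <=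
          q * (q - 1) * K * x ^ 2 - abspow q (y + x) - abspow q (y - x)) by lra.
  apply Hmono.
  - intros c Hc. auto_derive; change (fun s => abspow q s) with (abspow q);
      replace (y + - c) with (y - c) by ring.
    + split; [exists (q * abspow (q - 1) (y + c)); apply is_derive_abspow; lra |].
      split; [exists (q * abspow (q - 1) (y - c)); apply is_derive_abspow; lra | easy].
    + rewrite (is_derive_unique _ _ _ (is_derive_abspow q (y + c) ltac:(lra))).
      rewrite (is_derive_unique _ _ _ (is_derive_abspow q (y - c) ltac:(lra))).
      ring.
  - intros c Hc. continuity_pt_solve.
  - intros c Hc. pose proof (abspow_sub_le (q - 1) y c ltac:(lra) Hy ltac:(lra)) as Hsub.
    replace (q - 1 - 1) with (q - 2) in Hsub by ring. fold K in Hsub.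
    nra.
Qed.

Lemma rpow_abspow s p : 0 <= s -> rpow s p = abspow p s.
Proof.
  intros Hs. unfold rpow. destruct (Req_EM_T s 0) as [-> | Hs0].
  - rewrite abspow0. reflexivity.
  - rewrite abspow_exp by lra. reflexivity.
Qed.

Lemma rpow_sqrt s p : 0 <= s -> rpow s p = abspow (2 * p) (sqrt s).
Proof.
  intros Hs. rewrite rpow_abspow by lra. destruct (Req_dec s 0) as [-> | Hs0].
  - rewrite sqrt_0, !abspow0. reflexivity.
  - assert (Hr : 0 < sqrt s) by (apply sqrt_lt_R0; lra).
    rewrite !abspow_exp by lra. rewrite <- (sqrt_sqrt s) at 1 by lra.
    rewrite ln_mult by lra. f_equal. ring.
Qed.

Lemma rpow_le_1 s p : 0 <= s <= 1 -> 0 < p -> rpow s p <= 1.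
Proof.
  intros Hs Hp. unfold rpow. destruct (Req_EM_T s 0) as [-> | Hs0]; [lra |].
  assert (Hln : ln s <= 0) by (rewrite <- ln_1; apply ln_le; lra).
  unfold Rpower. rewrite <- exp_0. apply exp_le_exp. nra.
Qed.

Lemma rpow_1_plus s p : 0 <= s -> rpow s (1 + p) = s * rpow s p.
Proof.
  intros Hs. rewrite !rpow_abspow by lra. destruct (Req_dec s 0) as [-> | Hs0].
  - rewrite !abspow0. ring.
  - apply abspow_1_plus. lra.
Qed.

Theorem lemma2p4 (a b eps : R) :
  0 <= a -> a <= b -> b <= 1 -> 0 < eps -> eps < 1/2 ->
  (rpow (sqrt b + sqrt a) (2 * (1 + eps)) + rpow (sqrt b - sqrt a) (2 * (1 + eps))) / 2
    - rpow a (1 + eps) - rpow b (1 + eps)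
  <= (3 * eps + 2 * eps ^ 2) * a + (rpow b eps - rpow a eps) * a.
Proof.
  intros Ha Hab Hb He He2.
  assert (Hxy : 0 <= sqrt a <= sqrt b) by (split; [apply sqrt_pos | apply sqrt_le_1_alt; lra]).
  pose proof (abspow_add_sub_le (2 * (1 + eps)) (sqrt b) (sqrt a) ltac:(lra) Hxy) as Hsecond.
  rewrite (rpow_abspow (sqrt b + sqrt a)), (rpow_abspow (sqrt b - sqrt a)) by lra.
  replace (2 * (1 + eps) - 2) with (2 * eps) in Hsecond by ring.
  rewrite <- !rpow_sqrt, rpow_1_plus, pow2_sqrt in Hsecond by lra.
  rewrite (rpow_1_plus a), (rpow_1_plus b) by lra.
  pose proof (rpow_le_1 b eps ltac:(lra) He) as Hb_eps.
  assert (Hgap : 0 <= (3 * eps + 2 * eps ^ 2) * a * (1 - rpow b eps)).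
  { apply Rmult_le_pos; [apply Rmult_le_pos |]; nra. }
  nra.
Qed.
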